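(* Let $G$ be a subgroup of $\mathrm{Sp}(n,1)$ containing $d_n=\mathrm{diag}(1,\dots,1,i)$. Then for every $g\in\mathrm{Sp}(n,1)$, the set of traces of the elements of $gGg^{-1}$ is not contained in $\mathbb R$.
   Context: $\mathbb H$ denotes the quaternions, with units $i,j,k$. $\mathrm{Sp}(n,1)=\{A\in\mathrm{GL}(n+1,\mathbb H): A^*I_{n,1}A=I_{n,1}\}$ with $A^*$ the conjugate transpose and $I_{n,1}=\mathrm{diag}(1,\dots,1,-1)$. $d_n$ is the $(n+1)\times(n+1)$ diagonal matrix with diagonal entries $1,\dots,1,i$ (in this order). The trace of a quaternionic matrix is the sum of its diagonal entries. *)

From HB Require Import structures.
From mathcomp Require Import all_boot all_order all_algebra.
From mathcomp Require Import reals.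
From mathcomp Require Import ring.
Set Implicit Arguments. Unset Strict Implicit. Unset Printing Implicit Defensive.
Import Order.TTheory GRing.Theory Num.Theory.
Local Open Scope ring_scope.

Section Quaternions.
Variable R : comNzRingType.

(* a quaternion q0 + q1 i + q2 j + q3 k *)
Record quat := Quat { q0 : R; q1 : R; q2 : R; q3 : R }.

Definition quat2tuple (q : quat) := (q0 q, q1 q, q2 q, q3 q).
Definition tuple2quat (t : R * R * R * R) :=
  let: (a, b, c, d) := t in Quat a b c d.
Lemma quat2tupleK : cancel quat2tuple tuple2quat. Proof. by case. Qed.

HB.instance Definition _ := Choice.copy quat (can_type quat2tupleK).

Lemma quat_eq a b c d a' b' c' d' :
  a = a' -> b = b' -> c = c' -> d = d' -> Quat a b c d = Quat a' b' c' d'.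
Proof. by move=> -> -> -> ->. Qed.

Definition qzero := Quat 0 0 0 0.
Definition qopp q := Quat (- q0 q) (- q1 q) (- q2 q) (- q3 q).
Definition qadd p q := Quat (q0 p + q0 q) (q1 p + q1 q) (q2 p + q2 q) (q3 p + q3 q).

Lemma qaddA : associative qadd.
Proof. by case=> ????[????][????]; rewrite /qadd /=; apply: quat_eq; ring. Qed.
Lemma qaddC : commutative qadd.
Proof. by case=> ????[????]; rewrite /qadd /=; apply: quat_eq; ring. Qed.
Lemma qadd0 : left_id qzero qadd.
Proof. by case=> ????; rewrite /qadd /=; apply: quat_eq; ring. Qed.
Lemma qaddN : left_inverse qzero qopp qadd.
Proof. by case=> ????; rewrite /qadd /=; apply: quat_eq; ring. Qed.

HB.instance Definition _ := GRing.isZmodule.Build quat qaddA qaddC qadd0 qaddN.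

Definition qone := Quat 1 0 0 0.
(* Hamilton product, with i^2 = j^2 = k^2 = ijk = -1 *)
Definition qmul p q := Quat
  (q0 p * q0 q - q1 p * q1 q - q2 p * q2 q - q3 p * q3 q)
  (q0 p * q1 q + q1 p * q0 q + q2 p * q3 q - q3 p * q2 q)
  (q0 p * q2 q - q1 p * q3 q + q2 p * q0 q + q3 p * q1 q)
  (q0 p * q3 q + q1 p * q2 q - q2 p * q1 q + q3 p * q0 q).


Lemma qmulA : associative qmul.
Proof. by case=> ????[????][????]; rewrite /qmul /=; apply: quat_eq; ring. Qed.
Lemma qmul1 : left_id qone qmul.
Proof. by case=> ????; rewrite /qmul /=; apply: quat_eq; ring. Qed.
Lemma qmulr1 : right_id qone qmul.
Proof. by case=> ????; rewrite /qmul /=; apply: quat_eq; ring. Qed.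
Lemma qmulDl : left_distributive qmul qadd.
Proof. by case=> ????[????][????]; rewrite /qmul /qadd /=; apply: quat_eq; ring. Qed.
Lemma qmulDr : right_distributive qmul qadd.
Proof. by case=> ????[????][????]; rewrite /qmul /qadd /=; apply: quat_eq; ring. Qed.
Lemma qone_neq0 : qone != 0.
Proof. apply/negP => /eqP [] /eqP; by rewrite oner_eq0. Qed.

HB.instance Definition _ :=
  GRing.Zmodule_isNzRing.Build quat qmulA qmul1 qmulr1 qmulDl qmulDr qone_neq0.

Definition qconj q := Quat (q0 q) (- q1 q) (- q2 q) (- q3 q).
Definition qi := Quat 0 1 0 0.
Definition qreal (q : quat) : Prop := q1 q = 0 /\ q2 q = 0 /\ q3 q = 0.

End Quaternions.

Section SpN1.
Variable R : comNzRingType.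
Variable n : nat.
Local Notation M := 'M[quat R]_(n.+1).

Definition ctrmx (A : M) : M := (map_mx (@qconj R) A)^T.

Definition Jn1 : M := diag_mx (\row_(i < n.+1) if i == ord_max then -1 else 1).

Definition dn : M := diag_mx (\row_(i < n.+1) if i == ord_max then qi R else 1).

Definition invertible (A : M) : Prop := exists B : M, A * B = 1 /\ B * A = 1.

Definition Sp_n1 (A : M) : Prop := invertible A /\ ctrmx A * Jn1 * A = Jn1.

Definition subgroup_Sp (G : M -> Prop) : Prop :=
  (forall A, G A -> Sp_n1 A) /\ G 1 /\
  (forall A B, G A -> G B -> G (A * B)) /\
  (forall A, G A -> exists B, G B /\ A * B = 1 /\ B * A = 1).

End SpN1.

(* Take A := d_n. Write m for the last index and q for the last column of g.
   Since g^-1 = I_{n,1} g^* I_{n,1}, the entries of g^-1 in row m are +-conj(q_k),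
   and tr(g d_n g^-1) differs from a real number by
   q_m i conj(q_m) - \sum_(k <> m) q_k i conj(q_k).
   The (m,m) entry of g^* I_{n,1} g = I_{n,1} gives |q_m|^2 = 1 + \sum_(k <> m) |q_k|^2.
   Pairing with the real linear form x |-> (conj(q_m) x q_m)_i, the first term gives
   |q_m|^4 while each other term gives at most |q_m|^2 |q_k|^2, so the imaginary
   part of the trace cannot vanish. *)
From HB Require Import structures.
From mathcomp Require Import all_boot all_order all_algebra.
From mathcomp Require Import reals ring lra.
Import Order.TTheory GRing.Theory Num.Theory.
Set Implicit Arguments. Unset Strict Implicit. Unset Printing Implicit Defensive.
Local Open Scope ring_scope.

Section QuaternionNorm.
Variable R : comNzRingType.
Implicit Types p x y : quat R.

Lemma qmulE x y : x * y = qmul x y. Proof. by []. Qed.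
Lemma qaddE x y : x + y = qadd x y. Proof. by []. Qed.
Lemma qoppE x : - x = qopp x. Proof. by []. Qed.
Lemma qoneE : 1 = qone R. Proof. by []. Qed.
Definition qE := (qmulE, qaddE, qoppE, qoneE).

Definition qnorm2 x := q0 x ^+ 2 + q1 x ^+ 2 + q2 x ^+ 2 + q3 x ^+ 2.

Lemma q0_conj_mul x : q0 (qconj x * x) = qnorm2 x.
Proof. by case: x => ????; rewrite /qnorm2 !qE /=; ring. Qed.

Lemma q0N x : q0 (- x) = - q0 x. Proof. by []. Qed.

Lemma q0_sum (I : Type) (r : seq I) (P : pred I) (F : I -> quat R) :
  q0 (\sum_(i <- r | P i) F i) = \sum_(i <- r | P i) q0 (F i).
Proof. by apply: big_morph => // [[????][????]]. Qed.

(* On pure quaternions x, the i-coordinate of conj(p) x p is the scalar product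
   of x with p i conj(p). *)
Definition qproj p x := q1 (qconj p * x * p).
Arguments qproj : simpl never.

Lemma qproj_is_zmod_morphism p : zmod_morphism (qproj p).
Proof. by case: p => ????[????][????]; rewrite /qproj !qE /=; ring. Qed.

Section QprojAdditive.
Variable p : quat R.
HB.instance Definition _ :=
  GRing.isZmodMorphism.Build (quat R) R (qproj p) (qproj_is_zmod_morphism p).
End QprojAdditive.

Lemma qproj1 p : qproj p 1 = 0.
Proof. by case: p => ????; rewrite /qproj !qE /=; ring. Qed.

Lemma qproj_real p x : qreal x -> qproj p x = 0.
Proof.
case: p x => ????[????] [/= -> [/= -> /= ->]].
by rewrite /qproj !qE /=; ring.
Qed.

Lemma qproj_conj_i1 p x :
  qproj p (x * (qi R - 1) * qconj x) = qproj p (x * qi R * qconj x).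
Proof. by case: p x => ????[????]; rewrite /qproj !qE /=; ring. Qed.

Lemma qproj_conj_i_self p : qproj p (p * qi R * qconj p) = qnorm2 p ^+ 2.
Proof. by case: p => ????; rewrite /qproj /qnorm2 !qE /=; ring. Qed.

(* With y := conj(p) x: |y|^2 = |p|^2 |x|^2 and (y i conj(y))_i = |y|^2 - 2 (y_j^2 + y_k^2). *)
Lemma qproj_conj_iE p x : qproj p (x * qi R * qconj x) =
  qnorm2 p * qnorm2 x - 2 * (q2 (qconj p * x) ^+ 2 + q3 (qconj p * x) ^+ 2).
Proof. by case: p x => ????[????]; rewrite /qproj /qnorm2 !qE /=; ring. Qed.

End QuaternionNorm.

Section RealQuaternionNorm.
Variable R : realDomainType.
Implicit Types p x : quat R.

Lemma qnorm2_ge0 x : 0 <= qnorm2 x.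
Proof. by rewrite /qnorm2; do ! apply: addr_ge0; apply: sqr_ge0. Qed.

Lemma qproj_conj_i_le p x : qproj p (x * qi R * qconj x) <= qnorm2 p * qnorm2 x.
Proof.
rewrite qproj_conj_iE lerBlDr lerDl.
by apply: mulr_ge0 => //; apply: addr_ge0; apply: sqr_ge0.
Qed.

Lemma qproj_sum_conj_i_lt (I : finType) (q : I -> quat R) (m : I) :
  qnorm2 (q m) = 1 + \sum_(k | k != m) qnorm2 (q k) ->
  \sum_(k | k != m) qproj (q m) (q k * qi R * qconj (q k))
    < qproj (q m) (q m * qi R * qconj (q m)).
Proof.
set N := qnorm2 (q m); set S := \sum_(k | _) _ => eqN.
have S_ge0 : 0 <= S by apply: sumr_ge0 => k _; apply: qnorm2_ge0.
have le_sum : \sum_(k | k != m) qproj (q m) (q k * qi R * qconj (q k)) <= N * S.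
  by rewrite mulr_sumr; apply: ler_sum => k _; apply: qproj_conj_i_le.
rewrite qproj_conj_i_self -/N; apply: (le_lt_trans le_sum).
by rewrite eqN; nra.
Qed.

End RealQuaternionNorm.

Section SpN1Column.
Variables (R : comNzRingType) (n : nat).
Local Notation M := 'M[quat R]_(n.+1).
Local Notation m := (@ord_max n).
Local Notation J := (Jn1 R n).

Lemma Jn1E i j : J i j = (if i == m then -1 else 1) *+ (i == j).
Proof. by rewrite !mxE. Qed.

Lemma Jn1_invol : J * J = 1.
Proof.
apply/matrixP=> i j; rewrite -mulmxE mul_diag_mx !mxE.
by case: (i == m); case: (i == j); rewrite ?mulr0 ?mulN1r ?opprK ?mul1r.
Qed.

Lemma Sp_n1_inv (g ginv : M) :
  ctrmx g * J * g = J -> g * ginv = 1 -> ginv = J * ctrmx g * J.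
Proof.
move=> gJg gginv; have gJ : ctrmx g * J = J * ginv.
  by rewrite -[in RHS]gJg -mulrA gginv mulr1.
by rewrite -mulrA gJ mulrA Jn1_invol mul1r.
Qed.

Lemma Sp_n1_inv_last_row (g ginv : M) k :
  ctrmx g * J * g = J -> g * ginv = 1 ->
  ginv m k = if k == m then qconj (g k m) else - qconj (g k m).
Proof.
move=> gJg /(Sp_n1_inv gJg) ->.
rewrite /Jn1 -!mulmxE mul_mx_diag mxE mul_diag_mx !mxE eqxx eq_sym.
by rewrite mulN1r; case: (m == k); rewrite ?mulrN1 ?opprK ?mulr1.
Qed.

Lemma ctrmx_Jn1_mxE (g h : M) i j :
  (ctrmx g * J * h) i j = \sum_k qconj (g k i) * (if k == m then -1 else 1) * h k j.
Proof.
rewrite -!mulmxE !mxE; apply: eq_bigr => k _.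
by rewrite mul_mx_diag !mxE.
Qed.

Lemma Sp_n1_last_column (g : M) :
  ctrmx g * J * g = J ->
  qnorm2 (g m m) = 1 + \sum_(k | k != m) qnorm2 (g k m).
Proof.
move=> /(congr1 (fun A : M => q0 (A m m))).
rewrite ctrmx_Jn1_mxE q0_sum (bigD1 m) // eqxx mulrN1 mulNr q0N q0_conj_mul.
rewrite (eq_bigr (fun k => qnorm2 (g k m))) => [|k /negbTE ->]; last first.
  by rewrite mulr1 q0_conj_mul.
rewrite Jn1E eqxx mulr1n q0N /= => eq_col.
by apply: (addrI (-1)); rewrite -[X in X + _]eq_col; ring.
Qed.

Lemma mul_dn_mxE (g h : M) i j :
  (g * dn R n * h) i j = (g * h) i j + g i m * (qi R - 1) * h m j.
Proof.
rewrite /dn -!mulmxE mul_mx_diag !mxE.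
rewrite (eq_bigr (fun k => g i k * h k j
    + g i k * ((if k == m then qi R else 1) - 1) * h k j)); last first.
  by move=> k _; rewrite !mxE mulrBr mulr1 mulrBl addrC subrK.
rewrite big_split /=; congr (_ + _).
rewrite (bigD1 m) //= eqxx big1 ?addr0 // => k /negbTE ->.
by rewrite subrr mulr0 mul0r.
Qed.

Lemma Sp_n1_qproj_tr_dn (g ginv : M) p :
  ctrmx g * J * g = J -> g * ginv = 1 ->
  qproj p (\tr (g * dn R n * ginv)) = qproj p (g m m * qi R * qconj (g m m))
    - \sum_(k | k != m) qproj p (g k m * qi R * qconj (g k m)).
Proof.
move=> gJg gginv.
have diagE k : qproj p ((g * dn R n * ginv) k k)
    = qproj p (g k m * (qi R - 1) * ginv m k).
  by rewrite mul_dn_mxE gginv raddfD /= mxE eqxx mulr1n qproj1 add0r.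
rewrite /mxtrace raddf_sum /= (bigD1 m) // diagE (Sp_n1_inv_last_row _ gJg gginv) eqxx.
rewrite qproj_conj_i1 -sumrN; congr (_ + _); apply: eq_bigr => k /negbTE km.
by rewrite diagE (Sp_n1_inv_last_row _ gJg gginv) km mulrN raddfN /= qproj_conj_i1.
Qed.

End SpN1Column.

Theorem proposition4p10 (R : realType) (n : nat)
    (G : 'M[quat R]_(n.+1) -> Prop) :
  subgroup_Sp G -> G (dn R n) ->
  forall g ginv : 'M[quat R]_(n.+1),
    Sp_n1 g -> g * ginv = 1 -> ginv * g = 1 ->
    exists A, G A /\ ~ qreal (\tr (g * A * ginv)).
Proof.
move=> _ Gdn g ginv [_ gJg] gginv _; exists (dn R n); split=> //.
move=> /(qproj_real (g ord_max ord_max)) /eqP.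
rewrite Sp_n1_qproj_tr_dn // subr_eq0 gt_eqF //.
exact: (@qproj_sum_conj_i_lt _ _ (g^~ ord_max) _ (Sp_n1_last_column gJg)).
Qed.
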